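(* Let $q>1$ and let $(M,\le)$ be a finite ordered monoid such that $M$ is a $T_q$ monoid. Then $N^1(M)=\Omega(n)$.
   Context: $M$ is a $T_q$ monoid if there exist idempotents $e,f\in M$ (i.e. $ee=e$, $ff=f$) such that $(ef)^qe=e$ and $(ef)^re\ne e$ for every positive integer $r$ not divisible by $q$. A finite ordered monoid is a finite monoid with a partial order such that $x\le y\Rightarrow zx\le zy$ and $xz\le yz$. Non-deterministic communication complexity: for $f:X\times Y\to\{0,1\}$, $N^1(f)$ is the minimum cost of a non-deterministic protocol for $f$; equivalently, up to an additive constant 2, $N^1(f)=\log_2 C^1(f)$, where $C^1(f)$ is the minimum number of rectangles $S\times T$ on which $f\equiv1$ whose union is $f^{-1}(1)$. An order ideal is a subset $I\subseteq M$ with $y\in I, x\le y\Rightarrow x\in I$. For an order ideal $I$, $N^1(M,I)(n)$ is $N^1$ of the function where Alice receives $m_1,m_3,\dots,m_{2n-1}\in M$, Bob receives $m_2,\dots,m_{2n}\in M$, with value $1$ iff $m_1\cdots m_{2n}\in I$; $N^1(M)(n)=\max_I N^1(M,I)(n)$. Asymptotics are as $n\to\infty$. *)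

From mathcomp Require Import all_boot.
Set Implicit Arguments. Unset Strict Implicit. Unset Printing Implicit Defensive.

Section Comm.
Variables (X Y : finType) (f : X -> Y -> bool).

Definition is_1rect (R : {set X} * {set Y}) : bool :=
  [forall x in R.1, forall y in R.2, f x y].

Definition covers k (R : {ffun 'I_k -> {set X} * {set Y}}) : bool :=
  [forall i, is_1rect (R i)] &&
  [forall x, forall y, f x y ==> [exists i, (x \in (R i).1) && (y \in (R i).2)]].

Definition has_cover (k : nat) : bool :=
  [exists R : {ffun 'I_k -> {set X} * {set Y}}, covers R].

(* C^1(f): minimum number of 1-rectangles covering f^{-1}(1).  Since the
   singleton rectangles give a cover of size #|f^{-1}(1)| <= #|X| * #|Y|,
   the least k with has_cover k lies in 0 .. #|X| * #|Y|, so [find] over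
   iota 0 (#|X|*#|Y|).+1 returns exactly that minimum. *)
Definition C1 : nat := find has_cover (iota 0 (#|X| * #|Y|).+1).

End Comm.

(* The word problem: Alice holds m_1, m_3, ..., m_{2n-1} (as a i),
   Bob holds m_2, ..., m_{2n} (as b i); the product is
   m_1 m_2 ... m_{2n} = (a 0 * b 0) * (a 1 * b 1) * ... *)
Definition word_prod (M : Type) (mul : M -> M -> M) (one : M) (n : nat)
  (a b : {ffun 'I_n -> M}) : M :=
  \big[mul/one]_(i < n) mul (a i) (b i).

Definition order_ideal (M : finType) (le : M -> M -> bool) (I : {set M}) : Prop :=
  forall x y : M, y \in I -> le x y -> x \in I.

Definition efpow (M : Type) (mul : M -> M -> M) (e f : M) (r : nat) : M :=
  iter r (fun x => mul (mul e f) x) e.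

Definition Tq_monoid (M : Type) (mul : M -> M -> M) (q : nat) : Prop :=
  exists e f : M, mul e e = e /\ mul f f = f /\ efpow mul e f q = e /\
    forall r, 0 < r -> ~~ (q %| r) -> efpow mul e f r <> e.

From mathcomp Require Import all_boot all_algebra.
From mathcomp Require Import zify.
Set Implicit Arguments. Unset Strict Implicit. Unset Printing Implicit Defensive.
Import GRing.Theory.

(* The monoid computes inner products modulo a prime divisor p of q.  With
   g r := (ef)^r e, Alice's blocks (e, e^u, e) interleaved with Bob's blocks
   (f, f^v, 1) give e f e^u f^v e = g (1 + uv) e, so a word of N such blocks
   evaluates to g (N + #{blocks with u = v = 1}).  Taking the bits from
   x, y in 'F_p^m makes this count c <x, y> with c = q / p and N a multiple
   of q.  In an ordered T_q monoid g r <= e exactly when q divides r, so the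
   word lies in the order ideal below e iff <x, y> = 0.  A 1-rectangle of
   this inner-product function spans two orthogonal subspaces, hence has
   area at most p^m, while there are at least p^(2m-1) orthogonal pairs: a
   cover needs p^(m-1) >= 2^(m-1) rectangles, where m is proportional to n. *)

Section Covers.
Variables (X Y : finType) (f : X -> Y -> bool).

Lemma sum_ones_le_cover_size (X' Y' : finType) (al : X' -> X) (be : Y' -> Y)
    (h : X' -> Y' -> bool) (s : nat) :
  (forall x y, f (al x) (be y) = h x y) ->
  (forall (P : {set X'}) (Q : {set Y'}),
     (forall x y, x \in P -> y \in Q -> h x y) -> #|P| * #|Q| <= s) ->
  forall k, has_cover f k -> \sum_x \sum_y (h x y : nat) <= k * s.
Proof.
move=> Hf Hrect k /existsP [R /andP [/forallP R1 /forallP Rcov]].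
pose P i := [set x | al x \in (R i).1]; pose Q i := [set y | be y \in (R i).2].
have areaPQ i : #|P i| * #|Q i| <= s.
  apply: Hrect => x y; rewrite !inE => Hx Hy; rewrite -Hf.
  by have /forallP/(_ (al x))/implyP/(_ Hx)/forallP/(_ (be y))/implyP/(_ Hy) := R1 i.
have covered x y : h x y <= \sum_(i < k) ((x \in P i) && (y \in Q i)).
  case Hh: (h x y) => //.
  have /forallP/(_ (be y))/implyP := Rcov (al x); rewrite Hf Hh => /(_ isT).
  case/existsP => i /andP [xRi yRi].
  by rewrite (bigD1 i) //= !inE xRi yRi /= leq_addr.
have count_incidences :
    \sum_x \sum_y \sum_(i < k) ((x \in P i) && (y \in Q i) : nat)
    = \sum_(i < k) #|P i| * #|Q i|.
  under eq_bigr do rewrite exchange_big.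
  rewrite exchange_big /=; apply: eq_bigr => i _.
  rewrite -!sum1_card big_distrl /= [RHS]big_mkcond /=; apply: eq_bigr => x _.
  case: (x \in P i); rewrite ?mul1n /=; last by rewrite big1.
  by rewrite [RHS]big_mkcond; apply: eq_bigr => y _; case: (y \in Q i).
apply: (@leq_trans (\sum_x \sum_y \sum_(i < k) ((x \in P i) && (y \in Q i) : nat))).
  by do 2![apply: leq_sum => ? _].
rewrite count_incidences (@leq_trans (\sum_(i < k) s)) ?leq_sum //.
by rewrite sum_nat_const card_ord.
Qed.

(* [C1] only searches below #|X| * #|Y| + 1, hence the side condition. *)
Lemma C1_ge N :
  (forall k, has_cover f k -> N <= k) -> N <= (#|X| * #|Y|).+1 -> N <= C1 f.
Proof.
move=> Hcov HN; rewrite /C1; set s := iota _ _.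
have [Hs|Hs] := ltnP (find (has_cover f) s) (size s).
  apply: Hcov; have := nth_find 0 (etrans (has_find _ _) Hs).
  by rewrite nth_iota ?add0n // -(size_iota 0 (#|X| * #|Y|).+1).
by apply: leq_trans Hs; rewrite size_iota.
Qed.

End Covers.

Section Orthogonality.
Variable F : finFieldType.
Local Open Scope ring_scope.

Lemma card_submx r m (K : 'M[F]_(r, m)) :
  #|[set v : 'rV[F]_m | (v <= K)%MS]| = (#|F| ^ \rank K)%N.
Proof.
have -> : [set v : 'rV[F]_m | (v <= K)%MS] =
    (fun w : 'rV[F]_(\rank K) => w *m row_base K) @: setT.
  apply/setP => v; rewrite inE; apply/idP/imsetP.
    by rewrite -(eq_row_base K) => /submxP [w ->]; exists w.
  by move=> [w _ ->]; rewrite -(eq_row_base K); apply/submxP; exists w.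
rewrite card_imset; last exact: row_free_inj (row_base_free K).
by rewrite cardsT card_mx mul1n.
Qed.

Lemma mulmx_tr_eq0C r s m (A : 'M[F]_(r, m)) (B : 'M[F]_(s, m)) :
  (A *m B^T == 0) = (B *m A^T == 0).
Proof. by rewrite -trmx_eq0 trmx_mul trmxK. Qed.

Lemma orth_rect_area m (P Q : {set 'rV[F]_m}) :
  (forall x y, x \in P -> y \in Q -> x *m y^T = 0) ->
  (#|P| * #|Q| <= #|F| ^ m)%N.
Proof.
move=> PQ_orth.
pose U := (\sum_(x in P) <<x>>)%MS; pose V := (\sum_(y in Q) <<y>>)%MS.
have card_span (S : {set 'rV[F]_m}) : (#|S| <= #|F| ^ \rank (\sum_(x in S) <<x>>))%N.
  rewrite -card_submx; apply/subset_leq_card/subsetP => x xS.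
  by rewrite inE (sumsmx_sup x) // genmxE.
have VU : (V <= kermx U^T)%MS.
  apply/sumsmx_subP => y yQ; rewrite genmxE; apply/sub_kermxP/eqP.
  have /sub_kermxP/eqP : (U <= kermx y^T)%MS.
    by apply/sumsmx_subP => x xP; rewrite genmxE; apply/sub_kermxP/PQ_orth.
  by rewrite mulmx_tr_eq0C.
have rkUV : (\rank U + \rank V <= m)%N.
  by have := mxrankS VU; rewrite mxrank_ker mxrank_tr; have := rank_leq_col U; lia.
apply: leq_trans (leq_mul (card_span P) (card_span Q)) _.
by rewrite -expnD leq_pexp2l // ltnW // (card_finNzRing_gt1 F).
Qed.

Lemma orth_pairs_ge m :
  (#|F| ^ m * #|F| ^ m.-1
     <= \sum_(x : 'rV[F]_m) \sum_(y : 'rV[F]_m) (x *m y^T == 0%R : nat))%N.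
Proof.
rewrite -{1}[m]mul1n -card_mx -sum_nat_const; apply: leq_sum => x _.
have -> : \sum_(y : 'rV[F]_m) (x *m y^T == 0 : nat)
    = #|[set y : 'rV[F]_m | (y <= kermx x^T)%MS]|.
  rewrite -sum1dep_card [RHS]big_mkcond; apply: eq_bigr => y _.
  have -> : (y <= kermx x^T)%MS = (x *m y^T == 0).
    by rewrite mulmx_tr_eq0C; apply/sub_kermxP/eqP.
  by case: (_ == _).
rewrite card_submx mxrank_ker mxrank_tr leq_pexp2l ?(ltnW (card_finNzRing_gt1 F)) //.
by have := rank_leq_row x; lia.
Qed.

Lemma orth_reduction_cover_ge (X Y : finType) (h : X -> Y -> bool) m
    (al : 'rV[F]_m -> X) (be : 'rV[F]_m -> Y) :
  (forall x y, h (al x) (be y) = (x *m y^T == 0)) ->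
  forall k, has_cover h k -> (#|F| ^ m.-1 <= k)%N.
Proof.
move=> Hh k hk.
have Fm0 : (0 < #|F| ^ m)%N by rewrite expn_gt0 (ltnW (card_finNzRing_gt1 F)).
have rect_area (P Q : {set 'rV[F]_m}) :
    (forall x y, x \in P -> y \in Q -> x *m y^T == 0) -> (#|P| * #|Q| <= #|F| ^ m)%N.
  by move=> PQ; apply: orth_rect_area => x y xP yQ; apply/eqP/PQ.
have := leq_trans (orth_pairs_ge m) (sum_ones_le_cover_size Hh rect_area hk).
by rewrite mulnC leq_pmul2r.
Qed.

End Orthogonality.

Section TwoIdempotents.
Variables (M : Type) (mul : M -> M -> M) (one : M).
Hypothesis mulA : forall x y z, mul x (mul y z) = mul (mul x y) z.
Hypothesis mul1m : forall x, mul one x = x.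
Hypothesis mulm1 : forall x, mul x one = x.

Lemma big_nth_zip n (A B : seq M) :
  size A = size B -> size A <= n ->
  \big[mul/one]_(j < n) mul (nth one A j) (nth one B j)
  = \big[mul/one]_(ab <- zip A B) mul ab.1 ab.2.
Proof.
rewrite -(big_mkord xpredT (fun j => mul (nth one A j) (nth one B j))) /index_iota subn0.
elim: A B n => [|a A IH] [|b B] [|n] //=.
- by rewrite !big_nil.
- move=> _ _; rewrite big_nil.
  by elim: (0 :: _) => [|j r IHr]; rewrite ?big_nil // big_cons !nth_nil mulm1 mul1m.
- by move=> [sAB] sAn; rewrite !big_cons -[1]/(1 + 0) iotaDl big_map IH.
Qed.

Variables (e f : M).
Hypothesis he : mul e e = e.
Hypothesis hf : mul f f = f.
Local Notation g := (efpow mul e f).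

Lemma mul_e_efpow r : mul e (g r) = g r.
Proof. by case: r => [|r] //=; rewrite !mulA he. Qed.

Lemma efpowD r s : g (r + s) = mul (g r) (g s).
Proof. by elim: r => [|r IH]; rewrite ?mul_e_efpow //= IH mulA. Qed.

Lemma efpowM_fixed r t : g r = e -> g (r * t) = e.
Proof. by move=> gr; elim: t => [|t IH]; rewrite ?muln0 // mulnS efpowD gr IH he. Qed.

Definition blocksA (us : seq bool) : seq M :=
  flatten [seq [:: e; if u then e else one; e] | u <- us].
Definition blocksB (vs : seq bool) : seq M :=
  flatten [seq [:: f; if v then f else one; one] | v <- vs].

Lemma size_blocksA us : size (blocksA us) = 3 * size us.
Proof. by elim: us => [|u us IH] //=; rewrite IH mulnS. Qed.

Lemma size_blocksB vs : size (blocksB vs) = 3 * size vs.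
Proof. by elim: vs => [|v vs IH] //=; rewrite IH mulnS. Qed.

Lemma blocks_prod (T : Type) (J : seq T) (u v : T -> bool) : 0 < size J ->
  \big[mul/one]_(ab <- zip (blocksA (map u J)) (blocksB (map v J))) mul ab.1 ab.2
  = g (size J + \sum_(j <- J) (u j && v j)).
Proof.
have block uj vj R : mul e (mul (mul e f) (mul (mul (if uj then e else one)
    (if vj then f else one)) (mul (mul e one) R))) = mul (g (1 + (uj && vj))) (mul e R).
  have eeR x : mul (mul x e) e = mul x e by rewrite -mulA he.
  have ffR x : mul (mul x f) f = mul x f by rewrite -mulA hf.
  by case: uj; case: vj; rewrite /= ?mulm1 ?mul1m !mulA he ?eeR ?ffR ?eeR.
have mul_e_prod K : mul e (\big[mul/one]_(ab <- zip (blocksA (map u K))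
    (blocksB (map v K))) mul ab.1 ab.2) = g (size K + \sum_(j <- K) (u j && v j)).
  elim: K => [|j K IH]; first by rewrite big_nil big_nil mulm1.
  by rewrite /= !big_cons block IH -efpowD addnACA.
by case: J => [//|j J] _; rewrite -mul_e_prod /= !big_cons /= !mulA he.
Qed.

End TwoIdempotents.

Lemma sum_iota_ltn N a : \sum_(0 <= k < N) (k < a) = minn N a.
Proof.
elim: N => [|N IH]; first by rewrite big_geq // min0n.
by rewrite big_nat_recr //= IH; case: (ltnP N a) => ?; lia.
Qed.

Lemma sum_ord_ltn N (a : 'I_N) : \sum_(k < N) (k < a) = a.
Proof.
rewrite -(big_mkord xpredT (fun k => nat_of_bool (k < a))) sum_iota_ltn.
exact/minn_idPr/ltnW.
Qed.

Lemma sum_ord_ltn_pair N (a b : 'I_N) :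
  \sum_(k < N) \sum_(l < N) ((k < a) && (l < b)) = a * b.
Proof.
rewrite -{2}(sum_ord_ltn a) -{2}(sum_ord_ltn b) big_distrl /=.
apply: eq_bigr => k _; rewrite big_distrr /=.
by apply: eq_bigr => l _; case: (k < a); case: (l < b).
Qed.

Lemma sum_pairE (I J : finType) (G : I * J -> nat) :
  \sum_(u : I * J) G u = \sum_i \sum_j G (i, j).
Proof. by rewrite pair_bigA; apply: eq_bigr => -[]. Qed.

Section InnerProductCode.
Variables (p c m : nat).
Hypothesis p_pr : prime p.
Local Notation F := 'F_p.

Definition block_index := enum {: 'I_c * ('I_m * (F * F))}.

Lemma size_block_index : size block_index = c * (m * (p * p)).
Proof. by rewrite -cardE !card_prod !card_ord Fp_cast. Qed.

(* Each coordinate i gets c * p^2 blocks, indexed by (k, l) in F^2; the block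
   carries Alice's bit k < x_i and Bob's bit l < y_i, so c * x_i * y_i of
   them carry two ones. *)
Definition bitA (x : 'rV[F]_m) (j : 'I_c * ('I_m * (F * F))) : bool :=
  (j.2.2.1 < x ord0 j.2.1)%N.
Definition bitB (y : 'rV[F]_m) (j : 'I_c * ('I_m * (F * F))) : bool :=
  (j.2.2.2 < y ord0 j.2.1)%N.

Lemma sum_block_bits x y :
  \sum_(j <- block_index) (bitA x j && bitB y j)
  = c * \sum_(i < m) x ord0 i * y ord0 i.
Proof.
rewrite big_enum /= (eq_bigl xpredT) // sum_pairE /bitA /bitB /=.
rewrite sum_nat_const card_ord sum_pairE /=; congr (_ * _); apply: eq_bigr => i _.
by rewrite sum_pairE sum_ord_ltn_pair.
Qed.

Lemma orth_Fp_dvdn (x y : 'rV[F]_m) :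
  (x *m y^T == 0)%R = (p %| \sum_(i < m) x ord0 i * y ord0 i).
Proof.
have mx11_eq0 (A : 'M[F]_1) : (A == 0)%R = (A 0 0 == 0)%R.
  by apply/eqP/eqP => [->|A0]; rewrite ?mxE // [A]mx11_scalar A0 raddf0.
rewrite mx11_eq0 mxE (dvdn_pcharf (pchar_Fp p_pr)) natr_sum.
by congr (_ == _)%R; apply: eq_bigr => j _; rewrite mxE natrM !natr_Zp.
Qed.

End InnerProductCode.

Section OrderedTq.
Variables (M : Type) (mul : M -> M -> M) (one : M) (le : M -> M -> bool).
Hypothesis mulA : forall x y z, mul x (mul y z) = mul (mul x y) z.
Hypothesis mul1m : forall x, mul one x = x.
Hypothesis mulm1 : forall x, mul x one = x.
Hypothesis le_refl : forall x, le x x.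
Hypothesis le_anti : forall x y, le x y -> le y x -> x = y.
Hypothesis le_trans : forall x y z, le x y -> le y z -> le x z.
Hypothesis le_mulr : forall x y z, le x y -> le (mul x z) (mul y z).
Variables (q : nat) (e f : M).
Hypothesis he : mul e e = e.
Hypothesis hf : mul f f = f.
Hypothesis q_gt0 : 0 < q.
Hypothesis efpow_q : efpow mul e f q = e.
Hypothesis efpow_neq : forall r, 0 < r -> ~~ (q %| r) -> efpow mul e f r <> e.
Local Notation g := (efpow mul e f).

(* If g r <= e then g ((k+1) r) = g (k r) g r <= g (k r) e = g (k r), so
   e = g (q r) <= g r <= e. *)
Lemma efpow_le_e r : le (g r) e = (q %| r).
Proof.
apply/idP/idP => [gr_le|/dvdnP [t ->]]; last by rewrite mulnC efpowM_fixed // le_refl.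
have chain k : le (g (k.+1 * r)) (g r).
  elim: k => [|k IH]; first by rewrite mul1n le_refl.
  apply: le_trans IH; rewrite mulSn efpowD // -{2}(mul_e_efpow mulA f he (k.+1 * r)).
  exact: le_mulr.
have gr_e : g r = e.
  by apply: (le_anti gr_le); have := chain q.-1; rewrite prednK // efpowM_fixed.
apply/negPn/negP => ndvd.
have r_gt0 : 0 < r by case: r ndvd {gr_le chain gr_e} => //; rewrite dvdn0.
exact: efpow_neq r_gt0 ndvd gr_e.
Qed.

Lemma e_neq_one : 1 < q -> e <> one.
Proof.
move=> q_gt1 e1.
have efpowS_f r : g r.+1 = f.
  elim: r => [|r IH]; first by rewrite /= e1 mul1m mulm1.
  by rewrite (_ : g r.+2 = mul (mul e f) (g r.+1)) // IH e1 mul1m hf.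
apply: (efpow_neq (r := 1)) => //; first by rewrite dvdn1 gtn_eqF.
by rewrite efpowS_f -efpow_q -(prednK q_gt0) efpowS_f.
Qed.

Lemma word_prod_le_e_orth n p m : prime p -> p %| q -> 0 < m -> 3 * q * p * m <= n ->
  exists al be : 'rV['F_p]_m -> {ffun 'I_n -> M},
    forall x y, le (word_prod mul one (al x) (be y)) e = (x *m y^T == 0)%R.
Proof.
move=> p_pr p_dvd_q m_gt0 n_ge.
have p_gt0 := prime_gt0 p_pr.
pose c := q %/ p; have q_cp : q = c * p by rewrite divnK.
have c_gt0 : 0 < c by move: q_gt0; rewrite q_cp muln_gt0 => /andP [].
pose J := block_index p c m.
have sJ : size J = c * (m * (p * p)) by rewrite size_block_index.
have blocks_fit : 3 * size J <= n by rewrite sJ; move: n_ge; rewrite q_cp; nia.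
exists (fun x => [ffun j : 'I_n => nth one (blocksA one e (map (bitA x) J)) j]).
exists (fun y => [ffun j : 'I_n => nth one (blocksB one f (map (bitB y) J)) j]).
move=> x y; rewrite /word_prod; under eq_bigr do rewrite !ffunE.
rewrite (big_nth_zip mul1m mulm1); last 2 first.
- by rewrite size_blocksA size_blocksB !size_map.
- by rewrite size_blocksA size_map blocks_fit.
rewrite blocks_prod //; last by rewrite sJ !muln_gt0 c_gt0 m_gt0 p_gt0.
rewrite efpow_le_e sum_block_bits orth_Fp_dvdn // sJ q_cp.
have -> : c * (m * (p * p)) = (c * p) * (m * p) by rewrite -mulnA (mulnCA p m p).
by rewrite (dvdn_addr _ (dvdn_mulr _ (dvdnn _))) dvdn_pmul2l.
Qed.

End OrderedTq.

Lemma exp2_le_card_ffun (T : finType) n : 1 < #|T| -> 2 ^ n <= #|{ffun 'I_n -> T}|.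
Proof.
by move=> T_gt1; rewrite card_ffun card_ord; elim: n => // n IH; rewrite !expnS leq_mul.
Qed.

Theorem mainTheorem13
  (M : finType) (mul : M -> M -> M) (one : M) (le : M -> M -> bool)
  (mulA : forall x y z, mul x (mul y z) = mul (mul x y) z)
  (mul1m : forall x, mul one x = x) (mulm1 : forall x, mul x one = x)
  (le_refl : forall x, le x x)
  (le_anti : forall x y, le x y -> le y x -> x = y)
  (le_trans : forall x y z, le x y -> le y z -> le x z)
  (le_mull : forall x y z, le x y -> le (mul z x) (mul z y))
  (le_mulr : forall x y z, le x y -> le (mul x z) (mul y z))
  (q : nat) (hq : 1 < q) (hT : Tq_monoid mul q) :
  exists k : nat, 0 < k /\ exists n0 : nat, forall n : nat, n0 <= n ->
    exists I : {set M}, order_ideal le I /\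
      n %/ k <= trunc_log 2
        (C1 (fun a b : {ffun 'I_n -> M} => word_prod mul one a b \in I)).
Proof.
case: hT => e [f [he [hf [efpow_q efpow_neq]]]]; have q_gt0 := ltnW hq.
pose p := pdiv q; have p_pr : prime p := pdiv_prime hq.
exists (3 * q * p * 2); split; first by rewrite !muln_gt0 q_gt0 (prime_gt0 p_pr).
exists 0 => n _; exists [set z | le z e]; split.
  by move=> x y; rewrite !inE => y_le_e x_le_y; apply: le_trans x_le_y y_le_e.
rewrite divnMA; set m := n %/ (3 * q * p).
have [->|m_gt0] := posnP m; first by [].
have [al [be word_orth]] := word_prod_le_e_orth mulA mul1m mulm1 le_refl le_anti
  le_trans le_mulr he hf q_gt0 efpow_q efpow_neq p_pr (pdiv_dvd q) m_gt0
  (leq_trans (eq_leq (mulnC _ _)) (leq_divM n _)).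
suff C1_ge_exp2 : 2 ^ m.-1
    <= C1 (fun a b : {ffun 'I_n -> M} => word_prod mul one a b \in [set z | le z e]).
  have := trunc_log_max (isT : 1 < 2) C1_ge_exp2; lia.
apply: C1_ge => [k hk|].
  have := orth_reduction_cover_ge (fun x y => etrans (in_set _ _) (word_orth x y)) hk.
  rewrite card_Fp //; apply: leq_trans.
  by case: m.-1 => [|t] //; rewrite leq_exp2r // prime_gt1.
have e_neq_1 := e_neq_one mul1m mulm1 hf q_gt0 efpow_q efpow_neq hq.
have M_gt1 : 1 < #|M| by apply/card_gt1P; exists e, one; split => //; apply/eqP.
have ffun_ge := exp2_le_card_ffun n M_gt1.
have ffun_gt0 : 0 < #|{ffun 'I_n -> M}| by apply: leq_trans ffun_ge; rewrite expn_gt0.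
apply: leq_trans (leq_trans (leq_pmulr _ ffun_gt0) (leqnSn _)).
by apply: leq_trans ffun_ge; rewrite leq_exp2l // (leq_trans (leq_pred m)) ?leq_div.
Qed.
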